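(* Let $1\le l\le r$ and consider a canonical noiseless MMV model $B=AX$ in which $A$ satisfies $0\le\delta^L_{2k-r+l}(A)<1$ and the nonzero rows of $X$ are in general position. Let $I\subset\{1,\dots,n\}$ satisfy $|I|\le\min(2(k-r)+l-1,\,k-1)$, $|I\setminus\operatorname{supp}X|\le k-r+l-1$ and $|I\cap\operatorname{supp}X|\ge k-r$. Then for every $j\notin I$, the following are equivalent: (a) $j\in\operatorname{supp}X$; (b) $\operatorname{rank}[A_I~B]=\operatorname{rank}[A_{I\cup\{j\}}~B]$; (c) $\mathbf a_j^{*}P^\perp_{R([A_I~B])}\mathbf a_j=0$.
   Context: Canonical MMV setting: $m,n,r,k$ are positive integers with $r\le m<n$ and $r\le k$. $A\in\mathbb{R}^{m\times n}$ is the sensing matrix with columns $\mathbf a_1,\dots,\mathbf a_n$; $X\in\mathbb{R}^{n\times r}$ has rows $\mathbf x^1,\dots,\mathbf x^n$, $\operatorname{supp}X=\{i:\mathbf x^i\neq 0\}$ and $|\operatorname{supp}X|=k$; $B=AX\in\mathbb{R}^{m\times r}$ has full column rank $r$. For an index set $I$, $A_I$ is the submatrix of $A$ formed by the columns indexed by $I$, and $[A_I~B]$ denotes horizontal concatenation. $R(M)$ is the column space of $M$, $P_{R(M)}$ the orthogonal projection onto it, and $P^\perp_{R(M)}=\mathrm{Id}-P_{R(M)}$; $^*$ denotes transpose. The lower restricted isometry constant $\delta^L_s(A)$ is the smallest $\delta\ge0$ such that $(1-\delta)\|\mathbf x\|_2^2\le\|A\mathbf x\|_2^2$ for all $\mathbf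 x$ with at most $s$ nonzero entries. ''The nonzero rows of $X$ are in general position'' means any $r$ of the $k$ nonzero rows of $X$ are linearly independent. *)

From HB Require Import structures.
From mathcomp Require Import all_boot all_order all_algebra.
Set Implicit Arguments. Unset Strict Implicit. Unset Printing Implicit Defensive.
Import Order.TTheory GRing.Theory Num.Theory.
Local Open Scope ring_scope.

Section Defs.
Variable R : rcfType.

Definition suppX (n r : nat) (X : 'M[R]_(n, r)) : {set 'I_n} :=
  [set i | row i X != 0].

(* A_I : columns of A indexed by I (in increasing order) *)
Definition colsI (m n : nat) (A : 'M[R]_(m, n)) (I : {set 'I_n}) : 'M[R]_(m, #|I|) :=
  \matrix_(i < m, j < #|I|) A i (enum_val j).

Definition sqnorm (p : nat) (x : 'cV[R]_p) : R := \sum_i (x i 0) ^+ 2.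

Definition sparse (p s : nat) (x : 'cV[R]_p) : Prop := (#|[set i | x i ord0 != 0%R]| <= s)%N.

(* d is the lower restricted isometry constant delta^L_s(A) *)
Definition RIP_lower_prop (m n s : nat) (A : 'M[R]_(m, n)) (d : R) : Prop :=
  forall x : 'cV[R]_n, sparse s x -> (1 - d) * sqnorm x <= sqnorm (A *m x).
Definition is_lower_RIC (m n s : nat) (A : 'M[R]_(m, n)) (d : R) : Prop :=
  0 <= d /\ RIP_lower_prop s A d /\
  (forall d', 0 <= d' -> RIP_lower_prop s A d' -> d <= d').

(* orthogonal projection onto the column space R(M) of M:
   with Q a row basis of M^T (rows of Q span R(M)), P = Q^T (Q Q^T)^{-1} Q *)
Definition orthproj (m p : nat) (M : 'M[R]_(m, p)) : 'M[R]_m :=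
  let Q := row_base (M^T) in (Q^T *m invmx (Q *m Q^T)) *m Q.

Definition orthproj_perp (m p : nat) (M : 'M[R]_(m, p)) : 'M[R]_m :=
  1%:M - orthproj M.

Definition rows_general_position (n r : nat) (X : 'M[R]_(n, r)) : Prop :=
  forall S : {set 'I_n}, S \subset suppX X -> #|S| = r ->
    \rank (colsI X^T S) = r.

End Defs.

From HB Require Import structures.
From mathcomp Require Import all_boot all_order all_algebra.
From mathcomp Require Import zify.
Set Implicit Arguments. Unset Strict Implicit. Unset Printing Implicit Defensive.
Import Order.TTheory GRing.Theory Num.Theory.
Local Open Scope ring_scope.

(* Let W := R([A_I B]).  For j outside I the three conditions are linked as follows.
   - (b) <-> (c): adjoining a_j to [A_I B] keeps the rank iff a_j ∈ W
     (rank_adjoin_col), and a^T P^perp_W a = 0 iff a ∈ W, because the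
     orthogonal projector is symmetric and idempotent, so the quadratic form
     of P^perp is the squared norm of P^perp a (orthproj_perp_eq0).
   - (a) -> a_j ∈ W: extend (supp X) \ I to an r-set S' containing j; by general
     position the rows of X on S' form a basis, so some combination B w^T equals
     A c^T with c = indicator of j on S'; the remaining columns of c lie in I,
     hence a_j ∈ W (supp_col_in_span).
   - a_j ∈ W -> (a): otherwise a_j = A_I u + A X w gives a nonzero null vector of A
     supported on {j} ∪ I ∪ supp X, of size < 2k - r + l, which the lower RIP
     bound with δ < 1 forbids (span_col_in_supp, rip_kernel_trivial). *)

Section Projection.
Variable R : rcfType.

Lemma sqnormE (p : nat) (x : 'cV[R]_p) : sqnorm x = (x^T *m x) 0 0.
Proof. by rewrite mxE; apply: eq_bigr => i _; rewrite mxE expr2. Qed.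

Lemma sqnorm_eq0 (p : nat) (x : 'cV[R]_p) : sqnorm x = 0 -> x = 0.
Proof.
move=> x0; apply/matrixP => i j; rewrite (ord1 j) mxE.
have sq_ge0 (t : 'I_p) : true -> 0 <= x t 0 ^+ 2 by move=> _; exact: sqr_ge0.
by apply/eqP; rewrite -sqrf_eq0; apply/eqP; exact: (psumr_eq0P sq_ge0 x0).
Qed.

Section GramProjection.
Variables (q m : nat) (Q : 'M[R]_(q, m)).
Hypothesis freeQ : row_free Q.
Let P := Q^T *m invmx (Q *m Q^T) *m Q.

Lemma gram_unit : Q *m Q^T \in unitmx.
Proof.
rewrite -row_free_unit -kermx_eq0; apply/eqP/row_matrixP => i; rewrite row0.
set v := row i _.
have vG0 : v *m (Q *m Q^T) = 0 by apply/sub_kermxP; rewrite row_sub.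
have vQ0 : v *m Q = 0.
  apply: trmx_inj; rewrite trmx0; apply: sqnorm_eq0.
  by rewrite sqnormE trmxK trmx_mul mulmxA -(mulmxA v) vG0 mul0mx mxE.
by apply: (row_free_inj freeQ); rewrite vQ0 mul0mx.
Qed.

(* P is symmetric and fixes the rows of Q; together these make it an
   orthogonal projector *)
Lemma gram_proj_sym : P^T = P.
Proof. by rewrite /P !trmx_mul trmxK trmx_inv trmx_mul trmxK mulmxA. Qed.

Lemma gram_proj_fix : Q *m P = Q.
Proof. by rewrite /P !mulmxA mulmxV ?mul1mx //; exact: gram_unit. Qed.

Lemma gram_proj_perp_eq0 (a : 'cV[R]_m) :
  ((a^T *m (1%:M - P) *m a) 0 0 = 0) <-> (a^T <= Q)%MS.
Proof.
have idemP : P *m P = P by rewrite {1}/P -!mulmxA gram_proj_fix !mulmxA.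
have perp_sym : (1%:M - P)^T = 1%:M - P by rewrite linearB /= tr_scalar_mx gram_proj_sym.
have quadE : a^T *m (1%:M - P) *m a = ((1%:M - P) *m a)^T *m ((1%:M - P) *m a).
  have perp_idem : (1%:M - P) *m (1%:M - P) = 1%:M - P.
    by rewrite mulmxBl mul1mx mulmxBr mulmx1 idemP subrr subr0.
  by rewrite trmx_mul perp_sym -[RHS]mulmxA (mulmxA (1%:M - P)) perp_idem mulmxA.
split => [quad0 | /submxP [D ->]].
- have Pa : (1%:M - P) *m a = 0 by apply: sqnorm_eq0; rewrite sqnormE -quadE.
  have -> : a = P *m a by apply/eqP; rewrite -subr_eq0 -{1}[a]mul1mx -mulmxBl Pa.
  by rewrite trmx_mul gram_proj_sym /P mulmxA submxMl.
- by rewrite -(mulmxA D) mulmxBr mulmx1 gram_proj_fix subrr mulmx0 mul0mx mxE.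
Qed.

End GramProjection.

Lemma orthproj_perp_eq0 (m p : nat) (M : 'M[R]_(m, p)) (a : 'cV[R]_m) :
  ((a^T *m orthproj_perp M *m a) 0 0 = 0) <-> (a^T <= M^T)%MS.
Proof.
rewrite -(eq_row_base M^T) /orthproj_perp /orthproj /=.
exact: gram_proj_perp_eq0 (row_base_free M^T) a.
Qed.

End Projection.

Section ColumnSelection.
Variables (R : rcfType) (m n : nat) (A : 'M[R]_(m, n)).

Lemma colsI_row (I : {set 'I_n}) (t : 'I_#|I|) :
  row t (colsI A I)^T = (col (enum_val t) A)^T.
Proof. by apply/rowP => k; rewrite !mxE. Qed.

Lemma col_sub_colsI (I : {set 'I_n}) (i : 'I_n) :
  i \in I -> ((col i A)^T <= (colsI A I)^T)%MS.
Proof. by move=> iI; rewrite -(enum_rankK_in iI iI) -colsI_row row_sub. Qed.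

Lemma colsI_sub (I : {set 'I_n}) (p : nat) (W : 'M[R]_(p, m)) :
  (forall i, i \in I -> ((col i A)^T <= W)%MS) -> ((colsI A I)^T <= W)%MS.
Proof. by move=> sub; apply/row_subP => t; rewrite colsI_row sub ?enum_valP. Qed.

Lemma colsI_setU1 (I : {set 'I_n}) (j : 'I_n) :
  ((colsI A (j |: I))^T :=: (col j A)^T + (colsI A I)^T)%MS.
Proof.
apply/eqmxP/andP; split.
- apply: colsI_sub => i; rewrite in_setU1 => /predU1P [-> | iI].
    exact: addsmxSl.
  by apply: submx_trans (addsmxSr _ _); exact: col_sub_colsI.
- rewrite addsmx_sub col_sub_colsI ?setU11 //=.
  by apply: colsI_sub => i iI; apply: col_sub_colsI; exact: setU1r.
Qed.

Lemma rank_adjoin_col (p : nat) (B : 'M[R]_(m, p)) (I : {set 'I_n}) (j : 'I_n) :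
  \rank (row_mx (colsI A I) B) = \rank (row_mx (colsI A (j |: I)) B) <->
  ((col j A)^T <= (row_mx (colsI A I) B)^T)%MS.
Proof.
set N := (row_mx (colsI A I) B)^T.
have adjoinE : ((row_mx (colsI A (j |: I)) B)^T :=: (col j A)^T + N)%MS.
  rewrite /N !tr_row_mx; apply: eqmx_trans (eqmx_sym (addsmxE _ _)) _.
  apply: eqmx_trans (adds_eqmx (colsI_setU1 I j) (eqmx_refl _)) _.
  by rewrite -addsmxA; apply: adds_eqmx (eqmx_refl _) (addsmxE _ _).
rewrite -mxrank_tr -[\rank (row_mx (colsI A (j |: I)) B)]mxrank_tr -/N adjoinE.
have [_ rank_eq] := mxrank_leqif_sup (addsmxSr (col j A)^T N).
rewrite addsmx_sub submx_refl andbT in rank_eq.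
by split => [eqN | subN]; [rewrite -rank_eq eqN | apply/eqP; rewrite rank_eq].
Qed.

End ColumnSelection.

Lemma set_between (T : finType) (U S : {set T}) (r : nat) :
  U \subset S -> (#|U| <= r <= #|S|)%N ->
  exists2 V : {set T}, U \subset V & V \subset S /\ #|V| = r.
Proof.
move=> sUS /andP [leUr leRS]; have [d def_r] : exists d, r = (#|U| + d)%N.
  by exists (r - #|U|)%N; lia.
elim: d U sUS leUr def_r => [|d IHd] U sUS leUr def_r.
  by exists U; rewrite ?def_r ?addn0.
have /set0Pn [x] : S :\: U != set0.
  by rewrite setD_eq0; apply: contraTN isT => sSU; have := subset_leq_card sSU; lia.
rewrite in_setD => /andP [xU xS].
have cardxU : #|x |: U| = (#|U|.+1)%N by rewrite cardsU1 xU.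
have [V sxUV VS] : exists2 V : {set T}, x |: U \subset V & V \subset S /\ #|V| = r.
  by apply: IHd; rewrite ?subUset ?sub1set ?xS ?sUS // cardxU; lia.
by exists V => //; apply: subset_trans sxUV; exact: subsetUr.
Qed.

Section Support.
Variables (R : rcfType) (n r : nat) (X : 'M[R]_(n, r)).

Lemma suppX_entry0 (i : 'I_n) (s : 'I_r) : i \notin suppX X -> X i s = 0.
Proof. by rewrite inE negbK => /eqP /rowP /(_ s); rewrite !mxE. Qed.

Lemma comb_trX_supp (w : 'rV[R]_r) (i : 'I_n) :
  i \notin suppX X -> (w *m X^T) 0 i = 0.
Proof.
by move=> iS; rewrite mxE big1 // => s _; rewrite mxE suppX_entry0 ?mulr0.
Qed.

(* rows of X indexed by r elements of the support form a basis of 'rV_r, so some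
   combination of the columns of X^T is the indicator of j on those indices *)
Lemma supp_indicator (S : {set 'I_n}) (j : 'I_n) :
  rows_general_position X -> S \subset suppX X -> #|S| = r -> j \in S ->
  exists w : 'rV[R]_r, forall i, i \in S -> (w *m X^T) 0 i = (i == j)%:R.
Proof.
move=> genX sSX cardS jS; set C := colsI X^T S.
have fullC : row_full C by rewrite /row_full /C genX ?cardS.
have [w defw] : exists w : 'rV[R]_r, delta_mx 0 (enum_rank_in jS j) = w *m C.
  by apply/submxP; exact: submx_full.
exists w => i iS; have := congr1 (fun v : 'rV[R]_#|S| => v 0 (enum_rank_in jS i)) defw.
have enum_rank_eq : (enum_rank_in jS i == enum_rank_in jS j) = (i == j).
  by rewrite -(inj_eq enum_val_inj) !enum_rankK_in.
rewrite !mxE /= enum_rank_eq => ->.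
by apply: eq_bigr => s _; rewrite !mxE (enum_rankK_in jS iS).
Qed.

End Support.

Lemma col_sub_combination (R : rcfType) (m n p : nat) (A : 'M[R]_(m, n))
    (W : 'M[R]_(p, m)) (c : 'rV[R]_n) (j : 'I_n) :
  c 0 j = 1 -> (c *m A^T <= W)%MS ->
  (forall i, i != j -> c 0 i != 0 -> ((col i A)^T <= W)%MS) ->
  ((col j A)^T <= W)%MS.
Proof.
move=> cj1 cW colsW.
have combE : c *m A^T = (col j A)^T + \sum_(i | i != j) c 0 i *: (col i A)^T.
  rewrite mulmx_sum_row (bigD1 j) //= cj1 scale1r tr_col.
  by congr (_ + _); apply: eq_bigr => i _; rewrite tr_col.
have -> : (col j A)^T = c *m A^T - \sum_(i | i != j) c 0 i *: (col i A)^T.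
  by rewrite combE addrK.
rewrite addmx_sub // eqmx_opp summx_sub // => i ij.
have [-> | ci0] := eqVneq (c 0 i) 0; first by rewrite scale0r sub0mx.
by rewrite scalemx_sub // colsW.
Qed.

Section SpanDirections.
Variables (R : rcfType) (m n r : nat) (A : 'M[R]_(m, n)) (X : 'M[R]_(n, r)).

Lemma tr_row_mx_subl (p q : nat) (M : 'M[R]_(m, p)) (N : 'M[R]_(m, q)) :
  (M^T <= (row_mx M N)^T)%MS.
Proof. by rewrite tr_row_mx -addsmxE addsmxSl. Qed.

Lemma tr_row_mx_subr (p q : nat) (M : 'M[R]_(m, p)) (N : 'M[R]_(m, q)) :
  (N^T <= (row_mx M N)^T)%MS.
Proof. by rewrite tr_row_mx -addsmxE addsmxSr. Qed.

(* (a) => a_j ∈ R([A_I B]): a support column outside I lies in the span;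
   needs |supp X \ I| <= r <= |supp X| to fit j into an r-subset of the support *)
Lemma supp_col_in_span (I : {set 'I_n}) (j : 'I_n) :
  rows_general_position X -> (#|suppX X :\: I| <= r <= #|suppX X|)%N ->
  j \notin I -> j \in suppX X ->
  ((col j A)^T <= (row_mx (colsI A I) (A *m X))^T)%MS.
Proof.
move=> genX cardS jI jS; set S := suppX X in cardS jS.
have [S' sDS' [sS'S cardS']] := set_between (subsetDl S I) cardS.
have jS' : j \in S' by apply: (subsetP sDS'); rewrite in_setD jS jI.
have [w wE] := supp_indicator genX sS'S cardS' jS'.
apply: (@col_sub_combination _ _ _ _ _ _ (w *m X^T)); first by rewrite wE ?eqxx.
  by rewrite -mulmxA -trmx_mul; apply: submx_trans (tr_row_mx_subr _ _); exact: submxMl.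
move=> i ij ci0; apply: submx_trans (tr_row_mx_subl _ _); apply: col_sub_colsI.
apply: contraNT ci0 => iI; apply/eqP.
have [iS | iS] := boolP (i \in S); last exact: comb_trX_supp.
by rewrite wE ?(negbTE ij) //; apply: (subsetP sDS'); rewrite in_setD iS iI.
Qed.

Lemma span_colsI_support (I : {set 'I_n}) (u : 'rV[R]_m) :
  (u <= (colsI A I)^T)%MS ->
  exists2 v : 'rV[R]_n, u = v *m A^T & forall i, i \notin I -> v 0 i = 0.
Proof.
case/submxP => D ->; pose E : 'M[R]_(#|I|, n) := \matrix_(t, i) (enum_val t == i)%:R.
have selE : (colsI A I)^T = E *m A^T.
  apply/matrixP => t q; rewrite !mxE (bigD1 (enum_val t)) //= !mxE eqxx mul1r.
  by rewrite big1 ?addr0 // => i ne; rewrite !mxE eq_sym (negbTE ne) mul0r.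
exists (D *m E); first by rewrite selE mulmxA.
move=> i iI; rewrite mxE big1 // => t _; rewrite mxE.
have ne : enum_val t != i by apply: contraNneq iI => <-; exact: enum_valP.
by rewrite (negbTE ne) mulr0.
Qed.

Lemma rip_kernel_trivial (s : nat) (d : R) (x : 'cV[R]_n) :
  RIP_lower_prop s A d -> d < 1 -> sparse s x -> A *m x = 0 -> x = 0.
Proof.
move=> rip d1 sx Ax0; apply: sqnorm_eq0; apply/eqP; rewrite eq_le.
have sqnorm_ge0 : 0 <= sqnorm x by apply: sumr_ge0 => i _; exact: sqr_ge0.
rewrite sqnorm_ge0 andbT -(@ler_pM2l _ (1 - d)) ?subr_gt0 // mulr0.
have sqnorm0 : sqnorm (0 : 'cV[R]_m) = 0.
  by rewrite /sqnorm big1 // => i _; rewrite mxE expr0n.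
by have := rip x sx; rewrite Ax0 sqnorm0.
Qed.

Lemma span_col_in_supp (I : {set 'I_n}) (j : 'I_n) (s : nat) (d : R) :
  RIP_lower_prop s A d -> d < 1 -> (#|I :|: suppX X| < s)%N -> j \notin I ->
  ((col j A)^T <= (row_mx (colsI A I) (A *m X))^T)%MS -> j \in suppX X.
Proof.
move=> rip d1 cardIS jI; set S := suppX X in cardIS *.
rewrite tr_row_mx -addsmxE => /sub_addsmxP [[u1 u2] /= ajE].
have [v1 v1E v1I] := span_colsI_support (submxMl u1 (colsI A I)^T).
have [v2 v2E v2S] : exists2 v2 : 'rV[R]_n, u2 *m (A *m X)^T = v2 *m A^T &
    forall i, i \notin S -> v2 0 i = 0.
  by exists (u2 *m X^T) => [|i]; [rewrite trmx_mul mulmxA | exact: comb_trX_supp].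
pose v := delta_mx 0 j - v1 - v2.
have vA0 : v *m A^T = 0.
  by rewrite !mulmxBl -rowE -tr_col ajE v1E v2E -addrA -opprD subrr.
apply/negPn/negP => jS; suff vT0 : v^T = 0.
  have := congr1 (fun x : 'cV[R]_n => x j 0) vT0; rewrite !mxE (v1I j jI) v2S //.
  by rewrite !eqxx !subr0 => /eqP; rewrite oner_eq0.
apply: (rip_kernel_trivial rip d1); last by rewrite -[A]trmxK -trmx_mul vA0 trmx0.
rewrite /sparse; apply: leq_trans (subset_leq_card (_ : _ \subset j |: (I :|: S))) _.
  apply/subsetP => i; rewrite inE in_setU1 in_setU; apply: contraR.
  rewrite !negb_or => /and3P [ij iI iS].
  by rewrite !mxE (v1I i iI) v2S // (negbTE ij) andbF !subr0.
by rewrite cardsU1; case: (_ \notin _); rewrite ?add1n ?add0n // ltnW.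
Qed.

End SpanDirections.

Theorem theorem2 (R : rcfType) (m n r k l : nat)
  (A : 'M[R]_(m, n)) (X : 'M[R]_(n, r)) (I : {set 'I_n})
  (hr : (1 <= r)%N) (hrm : (r <= m)%N) (hmn : (m < n)%N) (hrk : (r <= k)%N)
  (hl1 : (1 <= l)%N) (hlr : (l <= r)%N)
  (hsupp : #|suppX X| = k)
  (hB : \rank (A *m X) = r)
  (hRIC : exists d : R, is_lower_RIC (2 * k - r + l)%N A d /\ d < 1)
  (hgen : rows_general_position X)
  (hI : (#|I| <= minn (2 * (k - r) + l - 1) (k - 1))%N)
  (hIout : (#|I :\: suppX X| <= k - r + l - 1)%N)
  (hIin : (k - r <= #|I :&: suppX X|)%N) :
  forall j : 'I_n, j \notin I ->
    (j \in suppX X <->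
       \rank (row_mx (colsI A I) (A *m X)) = \rank (row_mx (colsI A (j |: I)) (A *m X)))
    /\
    (\rank (row_mx (colsI A I) (A *m X)) = \rank (row_mx (colsI A (j |: I)) (A *m X)) <->
       ((col j A)^T *m orthproj_perp (row_mx (colsI A I) (A *m X)) *m col j A) 0 0 = 0).
Proof.
move=> j jI; have [d [[_ [rip _]] d1]] := hRIC.
have cardSI : (#|suppX X :\: I| <= r <= #|suppX X|)%N.
  by have := cardsID I (suppX X); rewrite setIC; lia.
have cardIS : (#|I :|: suppX X| < 2 * k - r + l)%N.
  by have := cardsID (suppX X) I; rewrite cardsU; lia.
rewrite rank_adjoin_col orthproj_perp_eq0; split=> //; split.
- exact: supp_col_in_span.
- exact: span_col_in_supp rip d1 cardIS jI.
Qed.
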